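(* Assume all $q_{ij}$ are roots of unity. Let $\mathbf{b}_1,\ldots,\mathbf{b}_n$ be a $\mathbb{Z}$-basis of the group $S$, and set $z_i=x^{\mathbf{b}_i}\in L$ for $i=1,\ldots,n$. The following are equivalent: (i) after reordering if necessary, $\mathbf{b}_1,\ldots,\mathbf{b}_n$ is a positive diagonal basis of $S$; (ii) the center $Z(L)$ of $L$ is a commutative Laurent series ring over $k$ in $z_1,\ldots,z_n$, i.e. $Z(L)$ consists exactly of the (well-defined) series $\sum_{m\in\mathbb{Z}^n}\mu_m z_1^{m_1}\cdots z_n^{m_n}$ with $\mu_m\in k$ and $\mu_m=0$ whenever $\min\{m_1,\ldots,m_n\}$ is sufficiently negative, and $Z(L)\cong k[[z_1^{\pm1},\ldots,z_n^{\pm1}]]$ via $z_i\mapsto z_i$; (iii) the center $Z(R)$ of $R$ is a commutative power series ring over $k$ in $z_1,\ldots,z_n$, i.e. $Z(R)$ consists exactly of the series $\sum_{m\in\mathbb{N}^n}\mu_m z_1^{m_1}\cdots z_n^{m_n}$, $\mu_m\in k$, and $Z(R)\cong k[[z_1,\ldots,z_n]]$.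
   Context: $k$ is an algebraically closed field, $n$ a positive integer, $q=(q_{ij})$ an $n\times n$ matrix over $k^\times$ with $q_{ii}=1$ and $q_{ij}=q_{ji}^{-1}$. $R=k_q[[x_1,\ldots,x_n]]$ is the $q$-commutative power series ring: the $k$-algebra of formal power series $\sum_{s\in\mathbb{N}^n}c_sx^s$ ($x^s=x_1^{s_1}\cdots x_n^{s_n}$) with multiplication determined by $x_ix_j=q_{ij}x_jx_i$. $L=k_q[[x_1^{\pm1},\ldots,x_n^{\pm1}]]$ is the Ore localization of $R$ at the multiplicative set generated by $x_1,\ldots,x_n$; its elements are series $\sum_{s\in\mathbb{Z}^n}c_sx^s$ with $c_s=0$ when $\min\{s_1,\ldots,s_n\}$ is sufficiently negative, and $x^s=x_1^{s_1}\cdots x_n^{s_n}$ for $s\in\mathbb{Z}^n$. Define $\sigma:\mathbb{Z}^n\times\mathbb{Z}^n\to k^\times$ by $\sigma(s,t)=\prod_{i,j=1}^n q_{ij}^{s_it_j}$ (so $x^sx^t=\sigma(s,t)x^tx^s$), and $S=\{s\in\mathbb{Z}^n:\sigma(s,t)=1\text{ for all }t\in\mathbb{Z}^n\}$, a free abelian subgroup of $\mathbb{Z}^n$ of rank $n$. A $\mathbb{Z}$-basis $\mathbf{b}_1,\ldots,\mathbf{b}_n$ of $S$ is positive diagonal if the $n\times n$ matrix whose $i$th row is $\mathbf{b}_i$ is diagonal with all diagonal entries positive. *)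

From HB Require Import structures.
From mathcomp Require Import all_boot all_order all_algebra all_fingroup.
Set Implicit Arguments. Unset Strict Implicit. Unset Printing Implicit Defensive.
Import Order.TTheory GRing.Theory Num.Theory.
Local Open Scope ring_scope.

(* Exponent vectors s in Z^n are row vectors 'rV[int]_n; the i-th
   component is s ord0 i.  A formal series sum_s c_s x^s is represented
   by its coefficient function c : 'rV[int]_n -> k. *)

(* L = k_q[[x^{+-1}]]: c_s = 0 whenever min_i s_i < -N, for some N. *)
Definition isL (k : fieldType) (n : nat) (c : 'rV[int]_n -> k) : Prop :=
  exists N : nat, forall s, c s != 0 -> forall i, - (N%:Z) <= s ord0 i.

(* R = k_q[[x]]: support in N^n. *)
Definition isR (k : fieldType) (n : nat) (c : 'rV[int]_n -> k) : Prop :=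
  forall s, c s != 0 -> forall i, 0 <= s ord0 i.

(* gam q s t : the scalar with x^s x^t = gam q s t x^(s+t), where
   x^s = x_1^{s_1} ... x_n^{s_n}; gam q s t = prod_{i>j} q_ij^{s_i t_j}. *)
Definition gam (k : fieldType) (n : nat) (q : 'M[k]_n) (s t : 'rV[int]_n) : k :=
  \prod_(i < n) \prod_(j < n | (j < i)%N) q i j ^ (s ord0 i * t ord0 j).

Definition sigma (k : fieldType) (n : nat) (q : 'M[k]_n) (s t : 'rV[int]_n) : k :=
  \prod_(i < n) \prod_(j < n) q i j ^ (s ord0 i * t ord0 j).

Definition inS (k : fieldType) (n : nat) (q : 'M[k]_n) (s : 'rV[int]_n) : Prop :=
  forall t, sigma q s t = 1.

Definition isZbasisS (k : fieldType) (n : nat) (q : 'M[k]_n) (B : 'M[int]_n) : Prop :=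
  (forall i, inS q (row i B)) /\
  (forall s, inS q s -> exists! m : 'rV[int]_n, s = m *m B).

Definition pos_diag_after_reorder (n : nat) (B : 'M[int]_n) : Prop :=
  exists p : 'S_n, forall i j : 'I_n,
    (i != j -> B (p i) j = 0) /\ 0 < B (p i) i.

Definition boxsum (k : fieldType) (n : nat) (M : nat) (F : 'rV[int]_n -> k) : k :=
  \sum_(v : {ffun 'I_n -> 'I_(M.*2.+1)}) F (\row_i ((v i : nat)%:Z - M%:Z)).

(* h = f * g for the twisted product with cocycle g0:
   h_u = sum_s f_s g_(u-s) g0(s,u-s)  (a finite sum for series in L;
   expressed as the eventually constant value of sums over large boxes). *)
Definition mulrel (k : fieldType) (n : nat) (g0 : 'rV[int]_n -> 'rV[int]_n -> k)
    (f g h : 'rV[int]_n -> k) : Prop :=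
  forall u, exists M : nat, forall M' : nat, (M <= M')%N ->
    h u = boxsum M' (fun s => f s * g (u - s) * g0 s (u - s)).

Definition central (k : fieldType) (n : nat) (P : ('rV[int]_n -> k) -> Prop)
    (g0 : 'rV[int]_n -> 'rV[int]_n -> k) (f : 'rV[int]_n -> k) : Prop :=
  forall g, P g -> forall h, mulrel g0 f g h <-> mulrel g0 g f h.

(* zcoef q B m : the scalar with z_1^{m_1} ... z_n^{m_n} = zcoef q B m x^{m B},
   where z_i = x^{b_i}, b_i = row i B.  Indeed (x^b)^m = gam(b,b)^{m(m-1)/2} x^{mb}
   for all m in Z, and x^{a_1} ... x^{a_n} = prod_{i<j} gam(a_i,a_j) x^{a_1+...+a_n}. *)
Definition zcoef (k : fieldType) (n : nat) (q : 'M[k]_n) (B : 'M[int]_n)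
    (m : 'rV[int]_n) : k :=
  (\prod_(i < n) gam q (row i B) (row i B) ^ ((m ord0 i * (m ord0 i - 1)) %/ 2)%Z) *
  \prod_(i < n) \prod_(j < n | (i < j)%N)
     gam q (m ord0 i *: row i B) (m ord0 j *: row j B).

(* f = sum_m mu_m z_1^{m_1} ... z_n^{m_n} (coefficientwise). *)
Definition PhiRel (k : fieldType) (n : nat) (q : 'M[k]_n) (B : 'M[int]_n)
    (mu f : 'rV[int]_n -> k) : Prop :=
  forall u, (forall m, m *m B = u -> f u = mu m * zcoef q B m) /\
            ((forall m, m *m B != u) -> f u = 0).

(* The center of the ring P (= L or R) is the (Laurent) power series ring over k
   in z_1..z_n, where the coefficient families mu range over P as well
   (i.e. over k[[z^{+-1}]] resp. k[[z]]), via mu |-> sum_m mu_m z^m. *)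
Definition center_is_series_ring (k : fieldType) (n : nat)
    (P : ('rV[int]_n -> k) -> Prop) (q : 'M[k]_n) (B : 'M[int]_n) : Prop :=
  [/\
      forall mu, P mu -> exists f, P f /\ PhiRel q B mu f,
      forall f, (P f /\ central P (gam q) f) <-> (exists mu, P mu /\ PhiRel q B mu f),
      forall mu nu f, P mu -> P nu -> PhiRel q B mu f -> PhiRel q B nu f -> mu = nu,
      forall (a : k) mu nu f g, PhiRel q B mu f -> PhiRel q B nu g ->
        PhiRel q B (fun s => a * mu s + nu s) (fun s => a * f s + g s)
    & (* multiplicativity: commutative product of k[[z]] goes to the product of L *)
      forall mu nu rho f g h, P mu -> P nu ->
        mulrel (fun _ _ => 1) mu nu rho ->
        PhiRel q B mu f -> PhiRel q B nu g -> PhiRel q B rho h ->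
        mulrel (gam q) f g h].

(* If, after reordering, B is diagonal with positive entries, then m |-> m B is a
   bijection from Z^n onto S preserving "bounded below" and "nonnegative", so the
   series sum_m mu_m z^m are exactly the series supported in S.  A series bounded
   below is central iff its support lies in S (test it against the variables x_j
   for one direction, use that gam is symmetric on S for the other), and the
   twisted product of two S-supported series is the commutative product of their
   z-coefficients because z^m z^m' = z^(m+m').

   Conversely, if the center is a (Laurent) power series ring in the z_i, then the
   central series sum_{t >= 0} z_i^t is bounded below, which forces B >= 0.  As
   q_jl are roots of unity, some d e_j lies in S; expanding the central series
   sum_{t >= 0} x^(t d e_j) in the z_i shows d e_j = m B with m >= 0, so some
   row of B is a positive multiple of e_j.  These rows give the reordering. *)
From HB Require Import structures.
From mathcomp Require Import all_boot all_order all_algebra all_fingroup.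
From mathcomp Require Import zify ring.
From Stdlib Require Import FunctionalExtensionality PropExtensionality Classical.
Set Implicit Arguments. Unset Strict Implicit. Unset Printing Implicit Defensive.
Import Order.TTheory GRing.Theory Num.Theory.
Local Open Scope ring_scope.

Lemma zero_ord1 : (0 : 'I_1) = ord0.
Proof. exact: val_inj. Qed.

Lemma sum_uniq_supp (R : nmodType) (T : eqType) (r1 r2 : seq T) (F : T -> R) :
  uniq r1 -> uniq r2 -> (forall s, F s != 0 -> (s \in r1) && (s \in r2)) ->
  \sum_(s <- r1) F s = \sum_(s <- r2) F s.
Proof.
move=> uniq1 uniq2 supp; apply: perm_big_supp; apply: uniq_perm; rewrite ?filter_uniq //.
by move=> s; rewrite !mem_filter; case: (boolP (F s != 0)) => //= /supp /andP[-> ->].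
Qed.

Lemma eventually_eq_iff (T : Type) (x : T) (A C : nat -> T) :
  (exists M0, forall M, (M0 <= M)%N -> A M = C M) ->
  ((exists M, forall M', (M <= M')%N -> x = A M') <->
   (exists M, forall M', (M <= M')%N -> x = C M')).
Proof.
case=> M0 eqAC; split=> -[M hM]; exists (maxn M0 M) => M' le.
  by rewrite -eqAC; [apply: hM|]; lia.
by rewrite eqAC; [apply: hM|]; lia.
Qed.

Lemma eventually_eq_uniq (T : Type) (x y : T) (A : nat -> T) :
  (exists M, forall M', (M <= M')%N -> x = A M') ->
  (exists M, forall M', (M <= M')%N -> y = A M') -> x = y.
Proof.
case=> M hM [M' hM']; rewrite (hM (maxn M M')) ?(hM' (maxn M M')) //.
  exact: leq_maxr.
exact: leq_maxl.
Qed.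

Section BoxSums.

Variables (k : fieldType) (n : nat).
Implicit Types (M : nat) (s u : 'rV[int]_n) (F G : 'rV[int]_n -> k).

Definition box_point M (v : {ffun 'I_n -> 'I_(M.*2.+1)}) : 'rV[int]_n :=
  \row_i ((v i : nat)%:Z - M%:Z).

Definition box_seq M := map (@box_point M) (index_enum {ffun 'I_n -> 'I_(M.*2.+1)}).

Definition inbox M s := forall i, - (M%:Z) <= s ord0 i <= M%:Z.

Lemma boxsumE M F : boxsum M F = \sum_(s <- box_seq M) F s.
Proof. by rewrite /boxsum /box_seq big_map. Qed.

Lemma box_point_inj M : injective (@box_point M).
Proof.
move=> v w /rowP eq_vw; apply/ffunP=> i; apply: val_inj.
by have := eq_vw i; rewrite !mxE => /addIr [].
Qed.

Lemma box_seq_uniq M : uniq (box_seq M).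
Proof. by rewrite map_inj_uniq ?index_enum_uniq //; apply: box_point_inj. Qed.

Lemma mem_box_seq M s : inbox M s -> s \in box_seq M.
Proof.
move=> s_in.
pose v : {ffun 'I_n -> 'I_(M.*2.+1)} := [ffun i => inord (absz (s ord0 i + M%:Z))].
suff -> : s = box_point v by apply: map_f; rewrite mem_index_enum.
apply/rowP=> j; rewrite !mxE ffunE zero_ord1.
have /andP[lo hi] := s_in j.
have sM : (absz (s ord0 j + M%:Z))%:Z = s ord0 j + M%:Z by rewrite gez0_abs; lia.
rewrite inordK; last by rewrite -ltz_nat sM -addnn; lia.
by rewrite sM addrK.
Qed.

Lemma inbox_le M M' s : (M <= M')%N -> inbox M s -> inbox M' s.
Proof. by move=> le s_in i; have := s_in i; lia. Qed.

Lemma inbox_norm u : inbox (\sum_j absz (u ord0 j)) u.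
Proof.
move=> i; have : (absz (u ord0 i) <= \sum_j absz (u ord0 j))%N.
  by rewrite (bigD1 i) //= leq_addr.
by move: (\sum_j _)%N => S; case: (u ord0 i) => x; rewrite ?NegzE /=; lia.
Qed.

Lemma inbox_lower_bounds (N1 N2 : nat) u s :
  (forall i, - (N1%:Z) <= s ord0 i) -> (forall i, - (N2%:Z) <= (u - s) ord0 i) ->
  inbox (N1 + N2 + \sum_j absz (u ord0 j)) s /\
  inbox (N1 + N2 + \sum_j absz (u ord0 j)) (u - s).
Proof.
move=> s_lb us_lb; split=> i; have := inbox_norm u i;
  have := s_lb i; have := us_lb i; rewrite !mxE;
  move: (\sum_j _)%N (u ord0 i) (s ord0 i) => S x y; lia.
Qed.

Lemma boxsum_reflect M M' u F :
  (forall s, F s != 0 -> inbox M' s /\ inbox M (u - s)) ->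
  boxsum M (fun s => F (u - s)) = boxsum M' F.
Proof.
move=> supp; rewrite !boxsumE -(big_map (fun s => u - s) xpredT).
apply: sum_uniq_supp; rewrite ?box_seq_uniq //.
  by rewrite map_inj_uniq ?box_seq_uniq // => x y /addrI /oppr_inj.
move=> s /supp [s_in us_in]; rewrite (mem_box_seq s_in) andbT.
rewrite -[s](subKr u); exact/map_f/mem_box_seq.
Qed.

Lemma eq_boxsum M F G : F =1 G -> boxsum M F = boxsum M G.
Proof. by move=> eqFG; apply: eq_bigr => v _; rewrite eqFG. Qed.

Lemma boxsum_single M F s0 :
  (forall s, s != s0 -> F s = 0) -> inbox M s0 -> boxsum M F = F s0.
Proof.
move=> supp s0_in; rewrite boxsumE (bigD1_seq s0) ?box_seq_uniq ?mem_box_seq //=.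
by rewrite big1 ?addr0 // => s /supp.
Qed.

End BoxSums.

Section Bicharacters.

Variables (k : fieldType) (n : nat) (q : 'M[k]_n) (P : rel 'I_n).
Hypothesis q_neq0 : forall i j, q i j != 0.

Definition bichar (s t : 'rV[int]_n) : k :=
  \prod_(i < n) \prod_(j < n | P i j) q i j ^ (s ord0 i * t ord0 j).

Lemma prodrXz (I : Type) (r : seq I) (Q : pred I) (F : I -> k) (z : int) :
  \prod_(i <- r | Q i) F i ^ z = (\prod_(i <- r | Q i) F i) ^ z.
Proof. by rewrite (big_morph (fun x => x ^ z) (fun x y => expfzMl x y z) (exp1rz _ z)). Qed.

Lemma bicharZl a s t : bichar (a *: s) t = bichar s t ^ a.
Proof.
rewrite /bichar -prodrXz; apply: eq_bigr => i _; rewrite -prodrXz.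
by apply: eq_bigr => j _; rewrite mxE exprz_exp; congr (_ ^ _); ring.
Qed.

Lemma bicharZr a s t : bichar s (a *: t) = bichar s t ^ a.
Proof.
rewrite /bichar -prodrXz; apply: eq_bigr => i _; rewrite -prodrXz.
by apply: eq_bigr => j _; rewrite mxE exprz_exp; congr (_ ^ _); ring.
Qed.

Lemma bichar_neq0 s t : bichar s t != 0.
Proof. by apply/prodf_neq0 => i _; apply/prodf_neq0 => j _; apply: expfz_neq0. Qed.

Lemma bichar_suml (I : Type) (r : seq I) (Q : pred I) (F : I -> 'rV[int]_n) t :
  bichar (\sum_(i <- r | Q i) F i) t = \prod_(i <- r | Q i) bichar (F i) t.
Proof.
apply: (big_morph (bichar^~ t)); last by rewrite /bichar big1 // => i _;
  rewrite big1 // => j _; rewrite mxE mul0r expr0z.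
move=> s s'; rewrite /bichar -big_split; apply: eq_bigr => i _; rewrite -big_split.
by apply: eq_bigr => j _; rewrite mxE mulrDl expfzDr.
Qed.

Lemma bichar_sumr (I : Type) (r : seq I) (Q : pred I) (F : I -> 'rV[int]_n) s :
  bichar s (\sum_(i <- r | Q i) F i) = \prod_(i <- r | Q i) bichar s (F i).
Proof.
apply: (big_morph (bichar s)); last by rewrite /bichar big1 // => i _;
  rewrite big1 // => j _; rewrite mxE mulr0 expr0z.
move=> t t'; rewrite /bichar -big_split; apply: eq_bigr => i _; rewrite -big_split.
by apply: eq_bigr => j _; rewrite mxE mulrDr expfzDr.
Qed.

Lemma bichar_mulmx m m' (B : 'M[int]_n) :
  bichar (m *m B) (m' *m B) =
  \prod_(i < n) \prod_(j < n) bichar (row i B) (row j B) ^ (m ord0 i * m' ord0 j).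
Proof.
rewrite !mulmx_sum_row bichar_suml; apply: eq_bigr => i _.
rewrite bichar_sumr; apply: eq_bigr => j _.
by rewrite bicharZl bicharZr exprz_exp; congr (_ ^ _); ring.
Qed.

End Bicharacters.

Lemma gamE (k : fieldType) n (q : 'M[k]_n) s t :
  gam q s t = bichar q (fun i j => (j < i)%N) s t.
Proof. by []. Qed.

Lemma sigmaE (k : fieldType) n (q : 'M[k]_n) s t :
  sigma q s t = bichar q (fun _ _ => true) s t.
Proof. by []. Qed.

Lemma prod_ltn_swap (R : comRingType) n (G : 'I_n -> 'I_n -> R) :
  \prod_(i < n) \prod_(j < n | (j < i)%N) G i j =
  \prod_(i < n) \prod_(j < n | (i < j)%N) G j i.
Proof.
rewrite (eq_bigr (fun i : 'I_n => \prod_(j < n) (if (j < i)%N then G i j else 1))).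
  by rewrite exchange_big /=; apply: eq_bigr => i _; rewrite [RHS]big_mkcond.
by move=> i _; rewrite big_mkcond.
Qed.

Lemma prod_split_diag (R : comRingType) n (G : 'I_n -> 'I_n -> R) :
  (forall i, G i i = 1) ->
  \prod_(i < n) \prod_(j < n) G i j =
  \prod_(i < n) \prod_(j < n | (j < i)%N) G i j *
  \prod_(i < n) \prod_(j < n | (i < j)%N) G i j.
Proof.
move=> G_diag; rewrite -[RHS]big_split; apply: eq_bigr => i _.
rewrite [X in _ = X * _]big_mkcond [X in _ = _ * X]big_mkcond -[RHS]big_split.
apply: eq_bigr => j _ /=.
case: (ltngtP j i) => [lt|gt|eq]; rewrite ?mulr1 ?mul1r //.
by have -> : j = i by apply: val_inj.
Qed.

Definition supp_bounded (k : fieldType) n (N : nat) (c : 'rV[int]_n -> k) :=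
  forall s, c s != 0 -> forall i, - (N%:Z) <= s ord0 i.

Definition bdd_series (k : fieldType) n (laurent : bool) (c : 'rV[int]_n -> k) :=
  exists N : nat, supp_bounded (if laurent then N else 0%N) c.

Lemma isLE (k : fieldType) n : @isL k n = bdd_series true.
Proof. by []. Qed.

Lemma isRE (k : fieldType) n : @isR k n = bdd_series false.
Proof.
apply: functional_extensionality => c; apply: propositional_extensionality.
by split=> [c_ge0|[N c_ge0] s /c_ge0 //]; exists 0%N.
Qed.

Lemma bdd_series_bounded (k : fieldType) n b (c : 'rV[int]_n -> k) :
  bdd_series b c -> exists N, supp_bounded N c.
Proof. by case=> N c_bd; exists (if b then N else 0%N). Qed.

Lemma bdd_series0 (k : fieldType) n b (c : 'rV[int]_n -> k) :
  supp_bounded 0 c -> bdd_series b c.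
Proof. by exists 0%N; case: b. Qed.

Definition x_ser (k : fieldType) n (j : 'I_n) : 'rV[int]_n -> k :=
  fun t => if t == delta_mx 0 j then 1 else 0.

Lemma x_ser_bounded (k : fieldType) n (j : 'I_n) : supp_bounded 0 (@x_ser k n j).
Proof.
move=> s; rewrite /x_ser; case: (s =P delta_mx 0 j) => [-> _ i|]; last by rewrite eqxx.
by rewrite mxE; case: (_ == _).
Qed.

Section TwistedSeries.

Variables (k : fieldType) (n : nat) (q : 'M[k]_n).
Hypotheses (q_neq0 : forall i j, q i j != 0) (q_diag : forall i, q i i = 1)
           (q_skew : forall i j, q i j = (q j i)^-1).
Implicit Types (f g h : 'rV[int]_n -> k) (s t u : 'rV[int]_n).

Lemma gam_neq0 s t : gam q s t != 0.
Proof. exact: bichar_neq0. Qed.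

Lemma gamC_sigma s t : gam q s t = sigma q s t * gam q t s.
Proof.
have gam_inv : gam q t s =
    \prod_(i < n) \prod_(j < n | (i < j)%N) (q i j ^ (s ord0 i * t ord0 j))^-1.
  rewrite /gam prod_ltn_swap; apply: eq_bigr => i _; apply: eq_bigr => j _.
  by rewrite (q_skew j i) exprz_inv invr_expz mulrC.
rewrite gam_inv /sigma prod_split_diag; last by move=> i; rewrite q_diag exp1rz.
rewrite -mulrA -big_split /= [X in _ * X](eq_bigr (fun i => 1)) ?big1_eq ?mulr1 //.
move=> i _; rewrite -big_split big1 // => j _ /=; rewrite mulfV //; exact: expfz_neq0.
Qed.

Lemma gam_sym_inS s t : inS q s -> gam q s t = gam q t s.
Proof. by move=> s_S; rewrite gamC_sigma s_S mul1r. Qed.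

Lemma inS_mulmx (B : 'M[int]_n) m : isZbasisS q B -> inS q (m *m B).
Proof.
move=> hB t; rewrite sigmaE mulmx_sum_row bichar_suml //; apply: big1 => i _.
by rewrite bicharZl -sigmaE (hB.1 i t) exp1rz.
Qed.

Lemma mulmx_Zbasis_inj (B : 'M[int]_n) :
  isZbasisS q B -> injective (fun m : 'rV[int]_n => m *m B).
Proof.
move=> hB m m' eq_mB; have [m0 [_ uniq_m0]] := hB.2 _ (inS_mulmx m hB).
by rewrite -(uniq_m0 m erefl) (uniq_m0 m').
Qed.

(* Reindexing s |-> u - s turns the sum for g f into the one for f g, and the
   twist gam s (u - s) / gam (u - s) s = sigma s (u - s) is 1 on the support of f. *)
Lemma central_of_supp_inS f g (N1 N2 : nat) :
  supp_bounded N1 f -> supp_bounded N2 g -> (forall s, f s != 0 -> inS q s) ->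
  forall h, mulrel (gam q) f g h <-> mulrel (gam q) g f h.
Proof.
move=> f_bd g_bd f_S h.
have fg_gf u : exists M0, forall M, (M0 <= M)%N ->
   boxsum M (fun s => f s * g (u - s) * gam q s (u - s)) =
   boxsum M (fun s => g s * f (u - s) * gam q s (u - s)).
  exists (N1 + N2 + \sum_j absz (u ord0 j))%N => M le.
  pose G t := f t * g (u - t) * gam q (u - t) t.
  transitivity (boxsum M (fun s => G (u - s))); last first.
    by apply: eq_boxsum => t; rewrite /G subKr [g _ * _]mulrC.
  rewrite (boxsum_reflect (M' := M)); last first.
    move=> t; rewrite !mulf_eq0 !negb_or => /andP[/andP[ft gt] _].
    by have [bt but] := inbox_lower_bounds (f_bd t ft) (g_bd _ gt);
      split; apply: inbox_le le _.
  apply: eq_boxsum => t; rewrite /G.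
  have [->|ft] := eqVneq (f t) 0; first by rewrite !mul0r.
  by rewrite (gamC_sigma t) (f_S t ft) mul1r.
by split=> fgh u; [apply: (proj1 (eventually_eq_iff (h u) (fg_gf u))) |
  apply: (proj2 (eventually_eq_iff (h u) (fg_gf u)))]; apply: fgh.
Qed.

(* Comparing the coefficients of x^(s + e_j) in f x_j and x_j f. *)
Lemma inS_of_central b f : central (bdd_series b) (gam q) f ->
  forall s, f s != 0 -> inS q s.
Proof.
move=> f_central s fs.
have sigma_e j : sigma q s (delta_mx 0 j) = 1.
  set e := delta_mx 0 j.
  have fx : mulrel (gam q) f (x_ser k j) (fun u => f (u - e) * gam q (u - e) e).
    move=> u; exists (\sum_(i < n) absz ((u - e)%R ord0 i))%N => M' le.
    rewrite (@boxsum_single _ _ _ _ (u - e)); last exact: inbox_le (inbox_norm _).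
      by rewrite subKr /x_ser eqxx mulr1.
    move=> t ne; rewrite /x_ser ifF ?mulr0 ?mul0r //.
    by apply/negbTE; apply: contraNneq ne => eq_e; rewrite /e -eq_e subKr.
  have xf : mulrel (gam q) (x_ser k j) f (fun u => f (u - e) * gam q e (u - e)).
    move=> u; exists (\sum_(i < n) absz (e ord0 i))%N => M' le.
    rewrite (@boxsum_single _ _ _ _ e); last exact: inbox_le (inbox_norm _).
      by rewrite /x_ser eqxx mul1r.
    by move=> t ne; rewrite /x_ser ifF ?mul0r //; apply/negbTE.
  have x_in := bdd_series0 b (@x_ser_bounded k n j).
  have := eventually_eq_uniq (proj1 (f_central _ x_in _) fx (s + e)) (xf (s + e)).
  rewrite !addrK => /(mulfI fs); rewrite (gamC_sigma s e) => eq_sigma.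
  by apply: (mulIf (gam_neq0 e s)); rewrite mul1r.
move=> t; rewrite (row_sum_delta t) sigmaE bichar_sumr //; apply: big1 => j _.
by rewrite bicharZr -sigmaE sigma_e exp1rz.
Qed.

Lemma central_bdd_series b f (N : nat) :
  supp_bounded N f -> (forall s, f s != 0 -> inS q s) -> central (bdd_series b) (gam q) f.
Proof.
move=> f_bd f_S g /bdd_series_bounded [N' g_bd]; exact: central_of_supp_inS f_bd g_bd f_S.
Qed.

End TwistedSeries.

Section SeriesInZ.

Variables (k : fieldType) (n : nat) (q : 'M[k]_n) (B : 'M[int]_n).
Hypothesis q_neq0 : forall i j, q i j != 0.
Implicit Types (mu nu f g : 'rV[int]_n -> k) (m u : 'rV[int]_n).

Lemma zcoef_neq0 m : zcoef q B m != 0.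
Proof.
rewrite /zcoef mulf_neq0 //; apply/prodf_neq0 => i _.
  exact/expfz_neq0/gam_neq0.
by apply/prodf_neq0 => j _; exact/gam_neq0.
Qed.

Lemma gam_mulmx m m' : gam q (m *m B) (m' *m B) =
  \prod_(i < n) \prod_(j < n) gam q (row i B) (row j B) ^ (m ord0 i * m' ord0 j).
Proof. exact: bichar_mulmx. Qed.

Lemma PhiRel_lin (a : k) mu nu f g :
  PhiRel q B mu f -> PhiRel q B nu g ->
  PhiRel q B (fun s => a * mu s + nu s) (fun s => a * f s + g s).
Proof.
move=> hf hg u; have [f_on f_off] := hf u; have [g_on g_off] := hg u; split.
  by move=> m e; rewrite (f_on m e) (g_on m e) mulrDl mulrA.
by move=> off; rewrite (f_off off) (g_off off) mulr0 addr0.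
Qed.

Lemma PhiRel_inj mu nu f : PhiRel q B mu f -> PhiRel q B nu f -> mu = nu.
Proof.
move=> hmu hnu; apply: functional_extensionality => m.
have := (hmu (m *m B)).1 m erefl; rewrite ((hnu (m *m B)).1 m erefl) => /eqP.
by rewrite eq_sym (inj_eq (mulIf (zcoef_neq0 m))) => /eqP.
Qed.

Lemma PhiRel_preimage mu f u :
  PhiRel q B mu f -> f u != 0 -> exists2 m, m *m B = u & mu m != 0.
Proof.
move=> hf fu; have [[m mB]|none] := classic (exists m, m *m B = u).
  exists m => //; move: fu; rewrite ((hf u).1 m mB).
  by apply: contraNneq => ->; rewrite mul0r.
by move: fu; rewrite ((hf u).2 (fun m => introN eqP (fun mB => none (ex_intro _ m mB)))) eqxx.
Qed.

Lemma PhiRel_of_supp_inS f : isZbasisS q B -> (forall s, f s != 0 -> inS q s) ->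
  PhiRel q B (fun m => f (m *m B) / zcoef q B m) f.
Proof.
move=> hB f_S u; split=> [m <-|off]; first by rewrite divfK ?zcoef_neq0.
apply/eqP; apply: contraT => fu; have [m [mB _]] := hB.2 u (f_S u fu).
by have := off m; rewrite -mB eqxx.
Qed.

Hypotheses (gam_rows_diag : forall i, gam q (row i B) (row i B) = 1)
           (gam_rows_sym : forall i j, gam q (row i B) (row j B) = gam q (row j B) (row i B)).

Lemma zcoefE m : zcoef q B m = \prod_(i < n) \prod_(j < n | (i < j)%N)
  gam q (row i B) (row j B) ^ (m ord0 i * m ord0 j).
Proof.
rewrite /zcoef big1 ?mul1r; last by move=> i _; rewrite gam_rows_diag exp1rz.
apply: eq_bigr => i _; apply: eq_bigr => j _.
by rewrite gamE bicharZl bicharZr -gamE exprz_exp; congr (_ ^ _); ring.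
Qed.

(* z^m z^m' = z^(m + m'), read off in the x-basis. *)
Lemma zcoefD m m' :
  zcoef q B (m + m') = zcoef q B m * zcoef q B m' * gam q (m *m B) (m' *m B).
Proof.
rewrite gam_mulmx prod_split_diag; last first.
  by move=> i; rewrite gam_rows_diag exp1rz.
rewrite prod_ltn_swap !zcoefE -mulrA.
rewrite -[X in _ * (_ * X)]big_split -[X in _ * X]big_split -big_split /=.
apply: eq_bigr => i _.
rewrite -[X in _ * (_ * X)]big_split -[X in _ * X]big_split -[RHS]big_split.
apply: eq_bigr => j _ /=.
rewrite (gam_rows_sym j i) -!expfzDr ?gam_neq0 //; congr (_ ^ _); rewrite !mxE; ring.
Qed.

Lemma PhiRel_mul_term mu nu f g m w :
  PhiRel q B mu f -> PhiRel q B nu g ->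
  f (m *m B) * g (w *m B - m *m B) * gam q (m *m B) (w *m B - m *m B) =
  mu m * nu (w - m) * zcoef q B w.
Proof.
move=> hf hg; rewrite ((hf _).1 m erefl) -mulmxBl ((hg _).1 (w - m) erefl).
have -> : zcoef q B w = zcoef q B (m + (w - m)) by rewrite addrC subrK.
rewrite zcoefD; ring.
Qed.

End SeriesInZ.

Definition diag_perm n (B : 'M[int]_n) (p : 'S_n) :=
  forall i j : 'I_n, (i != j -> B (p i) j = 0) /\ 0 < B (p i) i.

Section DiagonalBasis.

Variables (n : nat) (B : 'M[int]_n) (p : 'S_n).
Hypothesis B_diag : diag_perm B p.
Implicit Types (m u : 'rV[int]_n).

Definition diag_coords u : 'rV[int]_n :=
  \row_i (u ord0 ((p^-1)%g i) %/ B (p ((p^-1)%g i)) ((p^-1)%g i))%Z.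

Definition diag_divides u : bool := [forall j, (B (p j) j %| u ord0 j)%Z].

Definition diag_bound : nat := \sum_(j < n) absz (B (p j) j).

Lemma mulmx_diag m j : (m *m B) ord0 j = m ord0 (p j) * B (p j) j.
Proof.
rewrite mxE (reindex_inj (@perm_inj _ p)) (bigD1 j) //= big1 ?addr0 //.
by move=> i /negbTE ij; rewrite (proj1 (B_diag i j)) ?mulr0 // ij.
Qed.

Lemma mulmx_diag_inj : injective (fun m => m *m B).
Proof.
move=> m m' /rowP eq_mB; apply/rowP => i; rewrite zero_ord1; move: eq_mB; rewrite zero_ord1.
have [j ->] : exists j, i = p j by exists ((p^-1)%g i); rewrite permKV.
move=> /(_ j); rewrite !mulmx_diag => /mulIf; apply.
by rewrite lt0r_neq0 // (proj2 (B_diag j j)).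
Qed.

Lemma diag_coords_mul m : diag_coords (m *m B) = m.
Proof.
apply/rowP => i; rewrite zero_ord1 mxE mulmx_diag permKV mulzK //.
by rewrite gt_eqF //; have := proj2 (B_diag ((p^-1)%g i) ((p^-1)%g i)); rewrite permKV.
Qed.

Lemma diag_divides_mul m : diag_divides (m *m B).
Proof. by apply/forallP => j; rewrite mulmx_diag dvdz_mull. Qed.

Lemma diag_coordsK u : diag_divides u -> diag_coords u *m B = u.
Proof.
by move=> /forallP B_dvd; apply/rowP => j; rewrite zero_ord1 mulmx_diag mxE permK divzK.
Qed.

Lemma diag_le_bound j : B (p j) j <= diag_bound%:Z.
Proof.
have : (absz (B (p j) j) <= diag_bound)%N by rewrite /diag_bound (bigD1 j) //= leq_addr.
have := proj2 (B_diag j j); move: (B (p j) j) diag_bound => c C; lia.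
Qed.

Lemma lbound_mulmx_diag (N : nat) m : (forall i, - (N%:Z) <= m ord0 i) ->
  forall j, - ((N * diag_bound)%N%:Z) <= (m *m B) ord0 j.
Proof.
move=> m_lb j; rewrite mulmx_diag; have := m_lb (p j).
have := proj2 (B_diag j j); have := diag_le_bound j.
move: (B (p j) j) diag_bound (m ord0 (p j)) => c C x; nia.
Qed.

Lemma lbound_mulmx_diagV (N : nat) m : (forall j, - (N%:Z) <= (m *m B) ord0 j) ->
  forall i, - (N%:Z) <= m ord0 i.
Proof.
move=> mB_lb i; have [j ->] : exists j, i = p j by exists ((p^-1)%g i); rewrite permKV.
have := mB_lb j; rewrite mulmx_diag; have := proj2 (B_diag j j).
move: (B (p j) j) (m ord0 (p j)) => c x; nia.
Qed.

Lemma inbox_mulmx_diag (K : nat) m : inbox K m -> inbox (K * diag_bound) (m *m B).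
Proof.
move=> m_in j; rewrite mulmx_diag; have := m_in (p j).
have := proj2 (B_diag j j); have := diag_le_bound j.
move: (B (p j) j) diag_bound (m ord0 (p j)) => c C x; nia.
Qed.

Section Series.

Variables (k : fieldType) (q : 'M[k]_n).
Implicit Types (mu nu f g : 'rV[int]_n -> k).

Lemma gam_row_diag i : gam q (row i B) (row i B) = 1.
Proof.
have [i' ->] : exists i', i = p i' by exists (p^-1 i)%g; rewrite permKV.
rewrite /gam big1 // => a _; rewrite big1 // => b ba; rewrite !mxE.
have [ai'|ai'] := eqVneq a i'.
  have i'b : i' != b by apply: contraTneq ba => <-; rewrite ai' ltnn.
  by rewrite (proj1 (B_diag i' b) i'b) mulr0 expr0z.
by rewrite (proj1 (B_diag i' a)) ?mul0r ?expr0z // eq_sym.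
Qed.

(* The series sum_m mu_m z^m: its coefficient at x^u is nonzero only on the
   lattice S B = { m B }, where m is recovered by dividing by the diagonal. *)
Definition zseries mu u : k :=
  if diag_divides u then mu (diag_coords u) * zcoef q B (diag_coords u) else 0.

Lemma PhiRel_zseries mu : PhiRel q B mu (zseries mu).
Proof.
move=> u; split=> [m <-|off]; first by rewrite /zseries diag_divides_mul diag_coords_mul.
rewrite /zseries; case: ifP => // B_dvd.
by have := off (diag_coords u); rewrite diag_coordsK ?eqxx.
Qed.

Lemma bdd_series_PhiRel b mu f : bdd_series b mu -> PhiRel q B mu f -> bdd_series b f.
Proof.
case=> N mu_bd hf; exists (N * diag_bound)%N.
have -> : (if b then N * diag_bound else 0)%N = ((if b then N else 0) * diag_bound)%N.
  by case: (b).
move=> u fu; have [m <- mu_m] := PhiRel_preimage hf fu.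
exact: lbound_mulmx_diag (mu_bd _ mu_m).
Qed.

Lemma diag_divides_supp_add mu nu f g s t :
  PhiRel q B mu f -> PhiRel q B nu g -> f s != 0 -> g t != 0 -> diag_divides (s + t).
Proof.
move=> hf hg fs gt; have [m <- _] := PhiRel_preimage hf fs.
by have [m' <- _] := PhiRel_preimage hg gt; rewrite -mulmxDl diag_divides_mul.
Qed.

End Series.

End DiagonalBasis.

Section Forward.

Variables (k : fieldType) (n : nat) (q : 'M[k]_n).
Hypotheses (q_neq0 : forall i j, q i j != 0) (q_diag : forall i, q i i = 1)
           (q_skew : forall i j, q i j = (q j i)^-1).
Variables (B : 'M[int]_n) (p : 'S_n).
Hypotheses (hB : isZbasisS q B) (B_diag : diag_perm B p).
Implicit Types (mu nu rho f g h : 'rV[int]_n -> k).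

Lemma gam_rows_sym i j : gam q (row i B) (row j B) = gam q (row j B) (row i B).
Proof. exact/gam_sym_inS/(hB.1 i). Qed.

Lemma central_iff_PhiRel b f :
  bdd_series b f /\ central (bdd_series b) (gam q) f <->
  exists mu, bdd_series b mu /\ PhiRel q B mu f.
Proof.
split=> [[[N f_bd] f_central]|[mu [mu_bd hf]]].
  have f_S := inS_of_central q_neq0 q_diag q_skew f_central.
  exists (fun m => f (m *m B) / zcoef q B m); split; last exact: PhiRel_of_supp_inS.
  exists N => m; rewrite mulf_eq0 negb_or => /andP[fm _].
  exact: lbound_mulmx_diagV B_diag _ _ (f_bd _ fm).
have f_bd := bdd_series_PhiRel B_diag mu_bd hf.
split=> //; have [N f_bd'] := bdd_series_bounded f_bd.
apply: central_bdd_series f_bd' _ => // s fs.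
by have [m <- _] := PhiRel_preimage hf fs; apply: inS_mulmx.
Qed.

Lemma mulrel_PhiRel mu nu rho f g h (N1 N2 : nat) :
  supp_bounded N1 mu -> supp_bounded N2 nu -> mulrel (fun _ _ => 1) mu nu rho ->
  PhiRel q B mu f -> PhiRel q B nu g -> PhiRel q B rho h -> mulrel (gam q) f g h.
Proof.
move=> mu_bd nu_bd hrho hf hg hh u.
have [B_dvd|not_dvd] := boolP (diag_divides B p u); last first.
  exists 0%N => M _; rewrite (hh u).2; last first.
    by move=> m; apply: contraNneq not_dvd => <-; rewrite diag_divides_mul.
  rewrite boxsumE big1 // => s _.
  have [->|fs] := eqVneq (f s) 0; first by rewrite !mul0r.
  have [->|gus] := eqVneq (g (u - s)) 0; first by rewrite mulr0 mul0r.
  by have := diag_divides_supp_add B_diag hf hg fs gus; rewrite subrKC (negbTE not_dvd).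
set w := diag_coords B p u; have wB : w *m B = u by exact: diag_coordsK.
rewrite ((hh u).1 w wB); have [M1 hM1] := hrho w.
pose K := (N1 + N2 + \sum_j absz (w ord0 j))%N.
exists (K * diag_bound B p)%N => M' le.
rewrite (hM1 (maxn M1 K) (leq_maxl _ _)) !boxsumE mulr_suml.
have term m : f (m *m B) * g (u - m *m B) * gam q (m *m B) (u - m *m B) =
    mu m * nu (w - m) * 1 * zcoef q B w.
  by rewrite -wB (PhiRel_mul_term q_neq0 (gam_row_diag B_diag q) gam_rows_sym _ _ hf hg) mulr1.
rewrite (eq_bigr _ (fun m _ => esym (term m))).
rewrite -(big_map (fun m => m *m B) xpredT (fun s => f s * g (u - s) * gam q s (u - s))).
apply: sum_uniq_supp; rewrite ?box_seq_uniq //.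
  by rewrite map_inj_uniq ?box_seq_uniq //; apply: mulmx_diag_inj.
move=> s; rewrite !mulf_eq0 !negb_or => /andP[/andP[fs gs] _].
have [m mB mu_m] := PhiRel_preimage hf fs.
have nu_wm : nu (w - m) != 0.
  move: gs; rewrite -wB -mB -mulmxBl ((hg _).1 (w - m) erefl).
  by apply: contraNneq => ->; rewrite mul0r.
have [w_in _] := inbox_lower_bounds (mu_bd _ mu_m) (nu_bd _ nu_wm).
rewrite -mB; apply/andP; split.
  by apply/map_f/mem_box_seq; apply: inbox_le w_in; apply: leq_maxr.
by apply: mem_box_seq; apply: inbox_le le (inbox_mulmx_diag B_diag w_in).
Qed.

Lemma center_is_series_ring_diag b : center_is_series_ring (bdd_series b) q B.
Proof.
split.
- move=> mu mu_bd; exists (zseries B p q mu); split; last exact: PhiRel_zseries.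
  exact: bdd_series_PhiRel mu_bd (PhiRel_zseries _ _ _).
- exact: central_iff_PhiRel.
- by move=> mu nu f _ _; apply: PhiRel_inj.
- exact: PhiRel_lin.
- move=> mu nu rho f g h /bdd_series_bounded [N1 mu_bd] /bdd_series_bounded [N2 nu_bd].
  exact: mulrel_PhiRel mu_bd nu_bd.
Qed.

End Forward.

Lemma sigma_delta (k : fieldType) n (q : 'M[k]_n) j l :
  sigma q (delta_mx 0 j) (delta_mx 0 l) = q j l.
Proof.
rewrite /sigma (bigD1 j) //= [X in _ * X]big1 ?mulr1; last first.
  by move=> a aj; rewrite big1 // => b _; rewrite mxE (negbTE aj) mul0r expr0z.
rewrite (bigD1 l) //= [X in _ * X]big1 ?mulr1; last first.
  by move=> b bl; rewrite !mxE (negbTE bl) mulr0 expr0z.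
by rewrite !mxE !eqxx mulr1 expr1z.
Qed.

Lemma inS_delta_multiple (k : fieldType) n (q : 'M[k]_n) j :
  (forall i j, q i j != 0) -> (forall l, exists m : nat, (0 < m)%N /\ q j l ^+ m = 1) ->
  exists2 d : nat, (0 < d)%N & inS q (d%:Z *: delta_mx 0 j).
Proof.
move=> q_neq0 q_root; have [ord ord_spec] := fin_all_exists q_root.
exists (\prod_l ord l)%N; first by apply: prodn_gt0 => l; exact: (ord_spec l).1.
move=> t; rewrite sigmaE (row_sum_delta t) bichar_sumr // big1 // => l _.
rewrite bicharZr bicharZl -sigmaE sigma_delta -exprnP (bigD1 l) //=.
by rewrite exprM (ord_spec l).2 expr1n exp1rz.
Qed.

Definition ray_ser (k : fieldType) n (j : 'I_n) (d : nat) : 'rV[int]_n -> k :=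
  fun u => if [forall l, if l == j then (0 <= u ord0 l) && (d%:Z %| u ord0 l)%Z
                         else u ord0 l == 0] then 1 else 0.

Section RaySeries.

Variables (k : fieldType) (n : nat) (j : 'I_n) (d : nat).

Lemma ray_ser_bounded : supp_bounded 0 (@ray_ser k n j d).
Proof.
move=> s; rewrite /ray_ser; case: ifP; last by rewrite eqxx.
by move=> /forallP s_ray _ l; have := s_ray l; case: (l == j) => [/andP[] //|/eqP ->].
Qed.

Lemma ray_ser_scale (t : nat) : @ray_ser k n j d (t%:Z *: (d%:Z *: delta_mx 0 j)) = 1.
Proof.
rewrite /ray_ser ifT //; apply/forallP => l; rewrite !mxE zero_ord1 eqxx /=.
by case: (l == j) => /=; rewrite ?mulr1 ?mulr0 // dvdz_mull.
Qed.

Lemma ray_ser_supp u : @ray_ser k n j d u != 0 ->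
  exists t : int, u = t *: (d%:Z *: delta_mx 0 j).
Proof.
rewrite /ray_ser; case: ifP => [/forallP u_ray _|]; last by rewrite eqxx.
exists (u ord0 j %/ d%:Z)%Z; apply/rowP => l; rewrite zero_ord1 !mxE; have := u_ray l.
by case: (l =P j) => [-> /andP[_ d_dvd]|_ /eqP ->] /=; rewrite ?mulr1 ?divzK ?mulr0.
Qed.

End RaySeries.

(* The series sum_(t >= 0) z_i^t is well defined, so its coefficients are bounded below. *)
Lemma B_ge0_of_center (k : fieldType) n (q : 'M[k]_n) (B : 'M[int]_n) b :
  (forall i j, q i j != 0) -> center_is_series_ring (bdd_series b) q B ->
  forall i j, 0 <= B i j.
Proof.
move=> q_neq0 [well_def _ _ _ _] i j.
have [f [/bdd_series_bounded [N f_bd] hf]] :=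
  well_def _ (bdd_series0 b (@ray_ser_bounded k n i 1)).
pose m : 'rV[int]_n := (N.+1)%:Z *: (1%:Z *: delta_mx 0 i).
have fm : f (m *m B) != 0 by rewrite ((hf _).1 m erefl) ray_ser_scale mul1r zcoef_neq0.
by have := f_bd _ fm j; rewrite -!scalemxAl -rowE !mxE; move: (B i j) => x; nia.
Qed.

(* The central series sum_(t >= 0) x^(t v) is some sum_m mu_m z^m with mu bounded
   below; comparing the coefficients at v and at (N + 1) v forces v's coordinates
   to be nonnegative. *)
Lemma nonneg_coords_of_center (k : fieldType) n (q : 'M[k]_n) (B : 'M[int]_n) b j (d : nat) :
  (forall i j, q i j != 0) -> (forall i, q i i = 1) -> (forall i j, q i j = (q j i)^-1) ->
  isZbasisS q B -> center_is_series_ring (bdd_series b) q B ->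
  inS q (d%:Z *: delta_mx 0 j) ->
  exists2 m : 'rV[int]_n, m *m B = d%:Z *: delta_mx 0 j & forall i, 0 <= m ord0 i.
Proof.
move=> q_neq0 q_diag q_skew hB [_ center _ _ _] v_S.
set v := d%:Z *: delta_mx 0 j in v_S *; set f := @ray_ser k n j d.
have f_S s : f s != 0 -> inS q s.
  by move=> /ray_ser_supp [t ->] u; rewrite sigmaE bicharZl -sigmaE v_S exp1rz.
have f_central :=
  central_bdd_series q_neq0 q_diag q_skew (b := b) (@ray_ser_bounded k n j d) f_S.
have [mu [/bdd_series_bounded [N mu_bd] hf]] :=
  (center f).1 (conj (bdd_series0 b (@ray_ser_bounded k n j d)) f_central).
have f_ray t : f (t%:Z *: v) != 0 by rewrite /f ray_ser_scale oner_eq0.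
have [m m_v _] := PhiRel_preimage hf (f_ray 1%N).
have [mT mT_v mu_mT] := PhiRel_preimage hf (f_ray N.+1).
have mT_eq : mT = (N.+1)%:Z *: m.
  by apply: (mulmx_Zbasis_inj q_neq0 hB); rewrite mT_v -scalemxAl m_v scale1r.
exists m => [|i]; first by rewrite m_v scale1r.
by have := mu_bd _ mu_mT i; rewrite mT_eq mxE; move: (m ord0 i) => x; nia.
Qed.

Lemma row_of_nonneg_comb n (B : 'M[int]_n) (m : 'rV[int]_n) j (d : nat) :
  (forall i l, 0 <= B i l) -> (forall i, 0 <= m ord0 i) -> (0 < d)%N ->
  m *m B = d%:Z *: delta_mx 0 j ->
  exists i, 0 < B i j /\ forall l, l != j -> B i l = 0.
Proof.
move=> B_ge0 m_ge0 d_gt0 mB.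
have mB_col l : \sum_i m ord0 i * B i l = (d%:Z *: delta_mx 0 j : 'rV[int]_n) ord0 l.
  by rewrite -mB mxE.
have [i mBij] : exists i, 0 < m ord0 i * B i j.
  apply/not_all_not_ex => none; move: (mB_col j); rewrite !mxE eqxx mulr1.
  rewrite big1 => [d0|i _]; first lia.
  by apply/eqP; rewrite eq_le mulr_ge0 // andbT leNgt; exact/negP/none.
exists i; split.
  by move: mBij; have := m_ge0 i; have := B_ge0 i j; move: (m ord0 i) (B i j) => x y; nia.
move=> l lj; have := mB_col l; rewrite !mxE (negbTE lj) mulr0 => col0.
have := @psumr_eq0P _ _ xpredT _ (fun i _ => mulr_ge0 (m_ge0 i) (B_ge0 i l)) col0 i isT.
move: mBij; have := m_ge0 i; have := B_ge0 i j; have := B_ge0 i l.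
move: (m ord0 i) (B i j) (B i l) => x y w; nia.
Qed.

Lemma pos_diag_of_columns n (B : 'M[int]_n) :
  (forall j, exists i, 0 < B i j /\ forall l, l != j -> B i l = 0) ->
  pos_diag_after_reorder B.
Proof.
move=> col_rows; have [r r_spec] := fin_all_exists col_rows.
have r_inj : injective r.
  move=> j j' rj; apply/eqP; apply: contraT => jj'.
  by have := (r_spec j').1; rewrite -rj (r_spec j).2 1?eq_sym // ltxx.
exists (perm r_inj) => i j; rewrite permE; split; last exact: (r_spec i).1.
by move=> ij; apply: (r_spec i).2; rewrite eq_sym.
Qed.

Theorem theorem3p4 (k : closedFieldType) (n : nat) (hn : (0 < n)%N)
    (q : 'M[k]_n)
    (hq0 : forall i j, q i j != 0)
    (hqii : forall i, q i i = 1)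
    (hqij : forall i j, q i j = (q j i)^-1)
    (hroot : forall i j, exists m : nat, (0 < m)%N /\ q i j ^+ m = 1)
    (B : 'M[int]_n) (hB : isZbasisS q B) :
  [<-> pos_diag_after_reorder B;
       center_is_series_ring (@isL k n) q B;
       center_is_series_ring (@isR k n) q B].
Proof.
have center_of_diag b : pos_diag_after_reorder B -> center_is_series_ring (bdd_series b) q B.
  by case=> p B_diag; apply: center_is_series_ring_diag.
have diag_of_center b : center_is_series_ring (bdd_series b) q B -> pos_diag_after_reorder B.
  move=> center; apply: pos_diag_of_columns => j.
  have [d d_gt0 v_S] := inS_delta_multiple hq0 (hroot j).
  have [m mB m_ge0] := nonneg_coords_of_center hq0 hqii hqij hB center v_S.
  exact: row_of_nonneg_comb (B_ge0_of_center hq0 center) m_ge0 d_gt0 mB.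
rewrite isLE isRE; tfae=> [/center_of_diag //|/diag_of_center/center_of_diag //|].
exact: diag_of_center.
Qed.
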